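(* If $F$ is regular, i.e., $r''$ is bounded above on some interval $(1-\delta,1)$ with $\delta\in(0,1)$, then there exists $\alpha>1$ such that $r(v)r''(v)+r'(v)\le 1$ for every $v\in(0,1)$ with $\psi(v)\ge 1/\alpha$.
   Context: Let $F$ be a probability distribution on $[0,1]$ with support $[0,1]$ admitting a twice continuously differentiable density $f:(0,1)\to\mathbb{R}_{>0}$. Define the inverse hazard rate $r(v)=(1-F(v))/f(v)$ and the virtual valuation $\psi(v)=v-r(v)$ on $(0,1)$, and assume $\psi'(v)>0$ whenever $\psi(v)>0$. *)

From Stdlib Require Import Reals.
From Coquelicot Require Import Coquelicot.
Open Scope R_scope.

Definition C2_on_01 (f : R -> R) : Prop :=
  forall x, 0 < x < 1 ->
    ex_derive f x /\ ex_derive (Derive f) x /\ continuous (Derive_n f 2) x.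

Definition cdf_with_density (F f : R -> R) : Prop :=
  (forall x, 0 < x < 1 -> is_derive F x (f x)) /\
  filterlim F (at_right 0) (locally 0) /\
  filterlim F (at_left 1) (locally 1).

Definition inv_hazard (F f : R -> R) (v : R) : R := (1 - F v) / f v.

Definition virt_val (F f : R -> R) (v : R) : R := v - inv_hazard F f v.

Definition regular (F f : R -> R) : Prop :=
  exists delta M, 0 < delta < 1 /\
    forall v, 1 - delta < v < 1 -> Derive_n (inv_hazard F f) 2 v <= M.

(* The inverse hazard rate [r] is nonnegative because [F <= 1].  Let [r'' <= M]
   near [1] and pick [h] with [h M <= 1/4].  If [r v <= h/4] but
   [r v r''(v) + r'(v) > 1], then [r'(v) > 15/16], so [r' > 1/2] on [[v - h, v]]
   and [r v >= r (v - h) + h/2 >= h/2], a contradiction.  Since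
   [psi v = v - r v], the condition [psi v >= 1 - h/4] forces both
   [v >= 1 - h/4] and [r v <= h/4], so [alpha = 1 / (1 - h/4)] works. *)
From Stdlib Require Import Reals Lra.
From Coquelicot Require Import Coquelicot.
Open Scope R_scope.

Section InverseHazardRate.

Variables F f : R -> R.
Hypothesis hF : cdf_with_density F f.
Hypothesis hfpos : forall v, 0 < v < 1 -> 0 < f v.
Hypothesis hf2 : C2_on_01 f.

Lemma cdf_le_1 x : 0 < x < 1 -> F x <= 1.
Proof.
  intros hx. destruct hF as [hd [_ hlim]].
  apply (closed_filterlim_loc F (fun u => F x <= u) 1 hlim); [| apply closed_ge].
  assert (hpos : 0 < 1 - x) by lra.
  exists (mkposreal _ hpos). intros y hy hy1.
  apply Rabs_lt_between' in hy; simpl in hy.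
  left; apply (incr_function F 0 1 f); simpl; try lra.
  - intros z hz0 hz1; apply hd; lra.
  - intros z hz0 hz1; apply hfpos; lra.
Qed.

Lemma inv_hazard_nonneg x : 0 < x < 1 -> 0 <= inv_hazard F f x.
Proof.
  intros hx. apply Rdiv_le_0_compat.
  - pose proof (cdf_le_1 x hx). lra.
  - now apply hfpos.
Qed.

Lemma ex_derive_cdf x : 0 < x < 1 -> ex_derive F x.
Proof. intros hx. exists (f x). now apply hF. Qed.

Lemma Derive_inv_hazard x : 0 < x < 1 ->
  Derive (inv_hazard F f) x = (- f x ^ 2 - (1 - F x) * Derive f x) / f x ^ 2.
Proof.
  intros hx. pose proof (hfpos x hx). pose proof (ex_derive_cdf x hx).
  apply is_derive_unique. unfold inv_hazard. auto_derive.
  - repeat split; [assumption | now apply hf2 | lra].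
  - replace (Derive (fun y => F y) x) with (f x)
      by (symmetry; apply is_derive_unique; now apply hF).
    replace (Derive (fun y => f y) x) with (Derive f x) by reflexivity.
    field. lra.
Qed.

Lemma ex_derive_inv_hazard x : 0 < x < 1 -> ex_derive (inv_hazard F f) x.
Proof.
  intros hx. pose proof (hfpos x hx). pose proof (ex_derive_cdf x hx).
  unfold inv_hazard. auto_derive.
  repeat split; [assumption | now apply hf2 | lra].
Qed.

Lemma ex_derive_Derive_inv_hazard x : 0 < x < 1 ->
  ex_derive (Derive (inv_hazard F f)) x.
Proof.
  intros hx. pose proof (hfpos x hx). pose proof (ex_derive_cdf x hx).
  destruct (hf2 x hx) as [hf1 [hDf1 _]].
  apply (ex_derive_ext_loc (fun y => (- f y ^ 2 - (1 - F y) * Derive f y) / f y ^ 2)).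
  - apply (locally_interval _ x 0 1); simpl; try lra.
    intros y hy0 hy1. symmetry. apply Derive_inv_hazard. lra.
  - auto_derive. repeat split; auto. nra.
Qed.

End InverseHazardRate.

Lemma increment_ge_of_second_derivative_le (g g' g'' : R -> R) (a b M : R) :
  a < b -> 0 <= M ->
  (forall x, a <= x <= b -> is_derive g x (g' x)) ->
  (forall x, a <= x <= b -> is_derive g' x (g'' x)) ->
  (forall x, a <= x <= b -> g'' x <= M) ->
  (g' b - M * (b - a)) * (b - a) <= g b - g a.
Proof.
  intros hab hM hg hg' hg''.
  destruct (MVT_cor2 g g' a b hab) as [c [hgc hc]].
  { intros x hx. now apply is_derive_Reals, hg. }
  destruct (MVT_cor2 g' g'' c b) as [c' [hg'c hc']]; [lra | |].
  { intros x hx. apply is_derive_Reals, hg'. lra. }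
  assert (hc'M : g'' c' <= M) by (apply hg''; lra).
  assert (hslope : g' b - M * (b - a) <= g' c) by nra.
  rewrite hgc. apply Rmult_le_compat_r; lra.
Qed.

Lemma nonneg_semiconcave_rate_le_1 (g : R -> R) (d M : R) :
  0 < d ->
  (forall x, 1 - d < x < 1 -> ex_derive g x /\ ex_derive (Derive g) x) ->
  (forall x, 1 - d < x < 1 -> 0 <= g x) ->
  (forall x, 1 - d < x < 1 -> Derive_n g 2 x <= M) ->
  exists eps, 0 < eps < 1 /\
    forall v, 1 - eps <= v < 1 -> g v <= eps ->
      g v * Derive_n g 2 v + Derive g v <= 1.
Proof.
  intros hd hdiff hpos hM.
  set (M' := Rmax M 1).
  assert (hM1 : 1 <= M') by apply Rmax_r.
  assert (hM' : forall x, 1 - d < x < 1 -> Derive_n g 2 x <= M').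
  { intros x hx. apply Rle_trans with M; [now apply hM | apply Rmax_l]. }
  set (h := Rmin (d / 2) (/ (4 * M'))).
  assert (hh0 : 0 < h).
  { apply Rmin_glb_lt; [lra | apply Rinv_0_lt_compat; lra]. }
  assert (hhd : h <= d / 2) by apply Rmin_l.
  assert (hhM : h * M' <= / 4).
  { replace (/ 4) with (/ (4 * M') * M') by (field; lra).
    apply Rmult_le_compat_r; [lra | apply Rmin_r]. }
  exists (h / 4). split; [nra |].
  intros v hv hgv.
  destruct (Rle_lt_dec (g v * Derive_n g 2 v + Derive g v) 1) as [ok | hbad];
    [exact ok | exfalso].
  assert (hin : forall x, v - h <= x <= v -> 1 - d < x < 1) by (intros; lra).
  assert (hrise : (Derive g v - M' * h) * h <= g v - g (v - h)).
  { assert (hcur := increment_ge_of_second_derivative_le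
                      g (Derive g) (Derive_n g 2) (v - h) v M').
    replace (v - (v - h)) with h in hcur by ring.
    apply hcur; try lra; intros x hx.
    1, 2: apply Derive_correct, hdiff, hin, hx.
    apply hM', hin, hx. }
  assert (hgvv : 0 <= g v) by (apply hpos; lra).
  assert (hgh : 0 <= g (v - h)) by (apply hpos; lra).
  assert (hcurv : g v * Derive_n g 2 v <= g v * M') by
    (apply Rmult_le_compat_l; [lra | apply hM'; lra]).
  nra.
Qed.

Theorem lemma7 (F f : R -> R)
  (hF : cdf_with_density F f)
  (hfpos : forall v, 0 < v < 1 -> 0 < f v)
  (hf2 : C2_on_01 f)
  (hmon : forall v, 0 < v < 1 -> 0 < virt_val F f v ->
            0 < Derive (virt_val F f) v)
  (hreg : regular F f) :
  exists alpha, 1 < alpha /\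
    forall v, 0 < v < 1 -> / alpha <= virt_val F f v ->
      inv_hazard F f v * Derive_n (inv_hazard F f) 2 v
        + Derive (inv_hazard F f) v <= 1.
Proof.
  destruct hreg as [d [M [hd hM]]].
  destruct (nonneg_semiconcave_rate_le_1 (inv_hazard F f) d M) as [eps [heps hrate]].
  - lra.
  - intros x hx. split.
    + apply (ex_derive_inv_hazard F f hF hfpos hf2). lra.
    + apply (ex_derive_Derive_inv_hazard F f hF hfpos hf2). lra.
  - intros x hx. apply (inv_hazard_nonneg F f hF hfpos). lra.
  - exact hM.
  - exists (/ (1 - eps)). split.
    + rewrite <- Rinv_1. apply Rinv_lt_contravar; lra.
    + intros v hv hpsi. rewrite Rinv_inv in hpsi. unfold virt_val in hpsi.
      pose proof (inv_hazard_nonneg F f hF hfpos v hv).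
      apply hrate; lra.
Qed.
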